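(* Consider the multiobjective problem (MOP) $$\min_{(\bar{\mathbf z},\mathbf s)}\ \begin{pmatrix}g(\bar{\mathbf z})\\ h(\mathbf s)\end{pmatrix}\quad\text{subject to }(\bar{\mathbf z},\mathbf s)\in\mathbb S\text{ and }\exists\,(\mathbf z_1^\top,\dots,\mathbf z_{\mathcal I}^\top)^\top\in\mathbb D\text{ with }\bar{\mathbf z}=\tfrac1{\mathcal I}\textstyle\sum_{i=1}^{\mathcal I}\mathbf z_i,$$ and, for $\kappa\in[0,1]$, its weighted-sum scalarization of minimizing $\kappa g(\bar{\mathbf z})+(1-\kappa)h(\mathbf s)$ over the same feasible set. All efficient points of (MOP), except for the extremal points (those obtained from the scalarization with $\kappa\in\{0,1\}$), are properly efficient in the sense of Geoffrion.
   Context: Setting (a network of $\mathcal I\in\mathbb N$ residential energy systems with batteries). Fix an integer horizon $N\ge 2$, a time $k\in\mathbb N_0$, a step length $T>0$, and write $[m:n]=\{m,\dots,n\}$. For each $i\in[1:\mathcal I]$ the following are given: constants $\alpha_i,\beta_i,\gamma_i\in(0,1]$, a capacity $C_i\ge0$, bounds $\underline u_i<0<\bar u_i$, an initial state $x_i(k)\in[0,C_i]$, and data $w_i(n)\in\mathbb R$ for $n\in[k:k+N-1]$. Let $\mathbb U_i$ be the set of $(u^-,u^+)\in\mathbb R^2$ with $\underline u_i\le u^-\le0$, $0\le u^+\le\bar u_i$ and $0\le u^-/\underline u_i+u^+/\bar u_i\le1$. Let $\mathbb D_i\subset\mathbb R^N$ be the set of $\mathbf z_i=(z_i(k),\dots,z_i(k+N-1))^\top$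 for which there exist $(u_i^-(n),u_i^+(n))\in\mathbb U_i$, $n\in[k:k+N-1]$, with $x_i(n+1)=\alpha_i x_i(n)+T(\beta_iu_i^+(n)+u_i^-(n))\in[0,C_i]$ and $z_i(n)=w_i(n)+u_i^+(n)+\gamma_iu_i^-(n)$ for all $n\in[k:k+N-1]$; let $\mathbb D=\mathbb D_1\times\dots\times\mathbb D_{\mathcal I}$. A reference vector $\bar\zeta\in\mathbb R^N$ and tube bounds $\underline{\mathbf c},\bar{\mathbf c}\in\mathbb R^N$ are given, and $$\mathbb S=\Big\{(\bar{\mathbf z},\mathbf s)\in\mathbb R^N\times\mathbb R^{2N}_{\ge0}:\ \begin{pmatrix}I\\-I\end{pmatrix}\bar{\mathbf z}-\mathbf s\le\begin{pmatrix}\bar{\mathbf c}\\-\underline{\mathbf c}\end{pmatrix}\Big\}.$$ Objectives: $g(\bar{\mathbf z})=\frac1N\|\bar{\mathbf z}-\bar\zeta\|_2^2$, $h(\mathbf s)=\|\mathbf s\|_2^2$. For a vector problem $\min_{x\in\mathcal M}f(x)$, $f=(f_1,\dots,f_m)$: a feasible $x^\star$ is efficient if for all feasible $x$ and all $i$, $f_i(x)<f_i(x^\star)$ implies $f_j(x^\star)<f_j(x)$ for some $j$. It is properly efficient in the sense of Geoffrion if it is efficient and there exists $L>0$ such that for all $i$ and all feasible $x$ with $f_i(x)<f_i(x^\star)$ there exists $j$ with $f_j(x^\star)<f_j(x)$ and $\frac{f_i(x^\star)-f_i(x)}{f_j(x)-f_j(x^\star)}\le L$. *)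

From HB Require Import structures.
From mathcomp Require Import all_boot all_order all_algebra.
From mathcomp Require Import reals.
Set Implicit Arguments. Unset Strict Implicit. Unset Printing Implicit Defensive.
Import Order.TTheory GRing.Theory Num.Theory.
Local Open Scope ring_scope.

Section Defs.
Variable R : realType.

Definition efficient (X : Type) (m : nat) (M : X -> Prop)
  (f : 'I_m -> X -> R) (xs : X) : Prop :=
  M xs /\ forall x, M x -> forall i, f i x < f i xs ->
      exists j, f j xs < f j x.

Definition properly_efficient (X : Type) (m : nat) (M : X -> Prop)
  (f : 'I_m -> X -> R) (xs : X) : Prop :=
  efficient M f xs /\
  exists L : R, 0 < L /\
    forall i x, M x -> f i x < f i xs ->
      exists j, f j xs < f j x /\ (f i xs - f i x) / (f j x - f j xs) <= L.

Definition inU (ulo uhi um up : R) : Prop :=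
  [/\ ulo <= um <= 0, 0 <= up <= uhi & 0 <= um / ulo + up / uhi <= 1].

(** z \in D_i.  Time index n = k + j, j : 'I_N; the state trajectory is
    xs j = x_i(k + j), with xs 0 = x_i(k) = x0. *)
Definition inDi (N k : nat) (T alpha beta gamma C ulo uhi x0 : R)
  (w : nat -> R) (z : 'cV[R]_N) : Prop :=
  exists (um up : 'I_N -> R) (xs : nat -> R),
    xs 0%N = x0 /\
    forall j : 'I_N,
      [/\ inU ulo uhi (um j) (up j),
          xs j.+1 = alpha * xs j + T * (beta * up j + um j),
          0 <= xs j.+1 <= C &
          z j ord0 = w (k + j)%N + up j + gamma * um j].

Definition inS (N : nat) (cbar clow zbar : 'cV[R]_N) (s : 'cV[R]_(N + N))
  : Prop :=
  forall r : 'I_(N + N),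
    0 <= s r ord0 /\
    (col_mx zbar (- zbar) - s) r ord0 <= (col_mx cbar (- clow)) r ord0.

Definition gobj (N : nat) (zeta zbar : 'cV[R]_N) : R :=
  N%:R^-1 * \sum_(j < N) (zbar j ord0 - zeta j ord0) ^+ 2.

Definition hobj (N : nat) (s : 'cV[R]_(N + N)) : R :=
  \sum_(r < N + N) s r ord0 ^+ 2.

Definition feasible (I N k : nat) (T : R) (alpha beta gamma C ulo uhi x0 : 'I_I -> R)
  (w : 'I_I -> nat -> R) (cbar clow : 'cV[R]_N)
  (p : 'cV[R]_N * 'cV[R]_(N + N)) : Prop :=
  inS cbar clow p.1 p.2 /\
  exists z : 'I_I -> 'cV[R]_N,
    (forall i, inDi k T (alpha i) (beta i) (gamma i) (C i) (ulo i) (uhi i)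
                    (x0 i) (w i) (z i)) /\
    p.1 = I%:R^-1 *: \sum_(i < I) z i.

Definition fobj (N : nat) (zeta : 'cV[R]_N) (i : 'I_2)
  (p : 'cV[R]_N * 'cV[R]_(N + N)) : R :=
  if val i == 0%N then gobj zeta p.1 else hobj p.2.

Definition ws_solution (X : Type) (M : X -> Prop) (g h : X -> R)
  (kappa : R) (p : X) : Prop :=
  M p /\ forall q, M q ->
    kappa * g p + (1 - kappa) * h p <= kappa * g q + (1 - kappa) * h q.

End Defs.

(** The feasible set of (MOP) is convex (every constraint is linear in the
    decision variables and their controls) and g, h are convex quadratics,
    so Geoffrion's argument for convex biobjective problems applies.  If p is
    efficient and some feasible z has g z < g p, then h z > h p; take a
    feasible y with h y < h p.  Were the trade-off (g p - g z)/(h z - h p)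
    larger than (g y - g p)/(h p - h y), the convex combination of z and y
    that keeps h at most h p would strictly decrease g, against efficiency.
    Such z and y exist exactly when p does not minimise g or h alone, i.e.
    when p is not an extremal point. *)

From HB Require Import structures.
From mathcomp Require Import all_boot all_order all_algebra.
From mathcomp Require Import reals.
From mathcomp Require Import ring lra.
From Stdlib Require Import Classical.

Set Implicit Arguments.
Unset Strict Implicit.
Unset Printing Implicit Defensive.
Import Order.TTheory GRing.Theory Num.Theory.
Local Open Scope ring_scope.

Section RealConvexity.
Variable R : realType.

Lemma conv_ge (t a x y : R) : 0 <= t <= 1 ->
  a <= x -> a <= y -> a <= t * x + (1 - t) * y.
Proof. by move=> /andP[? ?] ? ?; nra. Qed.

Lemma conv_le (t b x y : R) : 0 <= t <= 1 ->
  x <= b -> y <= b -> t * x + (1 - t) * y <= b.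
Proof. by move=> /andP[? ?] ? ?; nra. Qed.

Lemma conv_itv (t a b x y : R) : 0 <= t <= 1 ->
  a <= x <= b -> a <= y <= b -> a <= t * x + (1 - t) * y <= b.
Proof. by move=> t01 /andP[? ?] /andP[? ?]; rewrite conv_ge ?conv_le. Qed.

Lemma sqr_conv (t a b : R) : 0 <= t <= 1 ->
  (t * a + (1 - t) * b) ^+ 2 <= t * a ^+ 2 + (1 - t) * b ^+ 2.
Proof.
move=> /andP[t0 t1].
have -> : t * a ^+ 2 + (1 - t) * b ^+ 2
    = (t * a + (1 - t) * b) ^+ 2 + t * (1 - t) * (a - b) ^+ 2 by ring.
by rewrite lerDl mulr_ge0 ?sqr_ge0 // mulr_ge0 ?subr_ge0.
Qed.

Lemma ler_pdiv_cross (a b c d : R) : 0 < b -> 0 < d ->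
  a * d <= b * c -> a / b <= c / d.
Proof. by move=> b0 d0 h; rewrite ler_pdivrMr // mulrAC ler_pdivlMr // [c * b]mulrC. Qed.

End RealConvexity.

Section ConvexBiobjective.
Variables (R : realType) (V : lmodType R).

Definition convex (M : V -> Prop) :=
  forall t x y, 0 <= t <= 1 -> M x -> M y -> M (t *: x + (1 - t) *: y).

Definition convex_fun (F : V -> R) :=
  forall t x y, 0 <= t <= 1 ->
    F (t *: x + (1 - t) *: y) <= t * F x + (1 - t) * F y.

Variables (M : V -> Prop) (G H : V -> R) (p : V).
Hypotheses (M_convex : convex M) (G_convex : convex_fun G)
  (H_convex : convex_fun H).
Hypothesis G_efficient : forall q, M q -> G q < G p -> H p < H q.

Lemma tradeoff_cross_bound z y : M z -> M y -> G z < G p -> H y < H p ->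
  (G p - G z) * (H p - H y) <= (H z - H p) * (G y - G p).
Proof.
move=> Mz My Gz Hy; have Hz := G_efficient Mz Gz.
rewrite leNgt; apply/negP => tradeoff_gt.
set t := (H p - H y) / (H z - H y).
have Hzy : 0 < H z - H y by lra.
have t_def : t * (H z - H y) = H p - H y by rewrite /t divfK ?gt_eqF.
have t01 : 0 <= t <= 1.
  by rewrite divr_ge0 ?ler_pdivrMr ?mul1r //=; lra.
have Mq := M_convex t01 Mz My.
have Gq := @G_convex t z y t01; have Hq := @H_convex t z y t01.
have H_comb : t * H z + (1 - t) * H y = H p by lra.
have G_comb : t * G z + (1 - t) * G y < G p.
  rewrite -subr_lt0 -(pmulr_rlt0 _ Hzy).
  have -> : (H z - H y) * (t * G z + (1 - t) * G y - G p)
      = (H z - H p) * (G y - G p) - (G p - G z) * (H p - H y).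
    by rewrite mulrC; nra.
  by rewrite subr_lt0.
have := G_efficient Mq (le_lt_trans Gq G_comb); lra.
Qed.

Lemma tradeoff_bound y : M y -> H y < H p ->
  forall x, M x -> G x < G p ->
    H p < H x /\ (G p - G x) / (H x - H p) <= (G y - G p) / (H p - H y).
Proof.
move=> My Hy x Mx Gx; have Hx := G_efficient Mx Gx.
split=> //; apply: ler_pdiv_cross; rewrite ?subr_gt0 //.
exact: tradeoff_cross_bound.
Qed.

End ConvexBiobjective.

Lemma ord2_cases (i : 'I_2) : i = ord0 \/ i = ord_max.
Proof. by case: i => [[|[|//]] ?]; [left | right]; apply/val_inj. Qed.

Lemma ord2_other (i j k : 'I_2) : i != j -> k != i -> j = k.
Proof.
by case: (ord2_cases i) (ord2_cases j) (ord2_cases k) => -> [] -> [] ->.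
Qed.

Lemma efficient2_lt (R : realType) (X : Type) (M : X -> Prop)
    (f : 'I_2 -> X -> R) (p : X) (i j : 'I_2) :
  efficient M f p -> i != j ->
  forall q, M q -> f i q < f i p -> f j p < f j q.
Proof.
move=> [_ eff] ij q Mq lt; have [k lt_k] := eff q Mq i lt.
have [ki|ki] := eqVneq k i; first by rewrite ki in lt_k; lra.
by rewrite (ord2_other ij ki).
Qed.

Theorem convex_biobjective_properly_efficient (R : realType) (V : lmodType R)
    (M : V -> Prop) (f : 'I_2 -> V -> R) (p : V) :
  convex M -> convex_fun (f ord0) -> convex_fun (f ord_max) ->
  efficient M f p ->
  (exists z, M z /\ f ord0 z < f ord0 p) ->
  (exists y, M y /\ f ord_max y < f ord_max p) ->
  properly_efficient M f p.
Proof.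
move=> Mc f0c f1c eff [z [Mz lt_z]] [y [My lt_y]].
have eff01 := efficient2_lt eff (isT : ord0 != ord_max :> 'I_2).
have eff10 := efficient2_lt eff (isT : ord_max != ord0 :> 'I_2).
have bound0 := tradeoff_bound Mc f0c f1c eff01 My lt_y.
have bound1 := tradeoff_bound Mc f1c f0c eff10 Mz lt_z.
set L0 := (f ord0 y - f ord0 p) / (f ord_max p - f ord_max y).
set L1 := (f ord_max z - f ord_max p) / (f ord0 p - f ord0 z).
have L0_gt0 : 0 < L0 by rewrite divr_gt0 ?subr_gt0 // eff10.
split=> //; exists (Num.max L0 L1); split; first by rewrite lt_max L0_gt0.
move=> i x Mx; case: (ord2_cases i) => -> lt_x.
- have [? le_x] := bound0 x Mx lt_x.
  by exists ord_max; rewrite le_max le_x.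
- have [? le_x] := bound1 x Mx lt_x.
  by exists ord0; rewrite le_max le_x orbT.
Qed.

Lemma not_ws_solution0 (R : realType) (X : Type) (M : X -> Prop) (g h : X -> R)
    (p : X) :
  M p -> ~ ws_solution M g h 0 p -> exists q, M q /\ h q < h p.
Proof.
move=> Mp not_ws; apply: NNPP => no_q; apply: not_ws; split=> // q Mq.
rewrite !mul0r !add0r subr0 !mul1r leNgt; apply/negP => lt_q.
by apply: no_q; exists q.
Qed.

Lemma not_ws_solution1 (R : realType) (X : Type) (M : X -> Prop) (g h : X -> R)
    (p : X) :
  M p -> ~ ws_solution M g h 1 p -> exists q, M q /\ g q < g p.
Proof.
move=> Mp not_ws; apply: NNPP => no_q; apply: not_ws; split=> // q Mq.
rewrite subrr !mul0r !addr0 !mul1r leNgt; apply/negP => lt_q.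
by apply: no_q; exists q.
Qed.

Section ConvexFeasibility.
Variable R : realType.

Lemma inU_conv (ulo uhi um1 up1 um2 up2 t : R) : 0 <= t <= 1 ->
  inU ulo uhi um1 up1 -> inU ulo uhi um2 up2 ->
  inU ulo uhi (t * um1 + (1 - t) * um2) (t * up1 + (1 - t) * up2).
Proof.
move=> t01 [um1_itv up1_itv u1_itv] [um2_itv up2_itv u2_itv].
split; rewrite ?conv_itv //.
have -> : (t * um1 + (1 - t) * um2) / ulo + (t * up1 + (1 - t) * up2) / uhi
    = t * (um1 / ulo + up1 / uhi) + (1 - t) * (um2 / ulo + up2 / uhi) by ring.
exact: conv_itv.
Qed.

Lemma inDi_convex (N k : nat) (T alpha beta gamma C ulo uhi x0 : R)
    (w : nat -> R) :
  convex (inDi (N := N) k T alpha beta gamma C ulo uhi x0 w).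
Proof.
move=> t z1 z2 t01 [um1 [up1 [xs1 [xs1_0 D1]]]] [um2 [up2 [xs2 [xs2_0 D2]]]].
exists (fun j => t * um1 j + (1 - t) * um2 j),
  (fun j => t * up1 j + (1 - t) * up2 j), (fun n => t * xs1 n + (1 - t) * xs2 n).
split=> [|j]; first by rewrite xs1_0 xs2_0; ring.
have [U1 step1 state1 out1] := D1 j; have [U2 step2 state2 out2] := D2 j.
split.
- exact: inU_conv.
- by rewrite step1 step2; ring.
- exact: conv_itv.
- by rewrite !mxE out1 out2; ring.
Qed.

Lemma inS_conv (N : nat) (cbar clow : 'cV[R]_N) (t : R) z1 s1 z2 s2 :
  0 <= t <= 1 -> inS cbar clow z1 s1 -> inS cbar clow z2 s2 ->
  inS cbar clow (t *: z1 + (1 - t) *: z2) (t *: s1 + (1 - t) *: s2).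
Proof.
move=> t01 S1 S2 r; have [s1_ge0 S1r] := S1 r; have [s2_ge0 S2r] := S2 r.
split; first by rewrite !mxE conv_ge.
have -> : col_mx (t *: z1 + (1 - t) *: z2) (- (t *: z1 + (1 - t) *: z2))
    - (t *: s1 + (1 - t) *: s2)
    = t *: (col_mx z1 (- z1) - s1) + (1 - t) *: (col_mx z2 (- z2) - s2).
  by apply/matrixP => i j; rewrite !mxE; case: splitP => i' _; rewrite !mxE; ring.
set A := col_mx z1 (- z1) - s1 in S1r *; set B := col_mx z2 (- z2) - s2 in S2r *.
have -> : (t *: A + (1 - t) *: B) r ord0 = t * A r ord0 + (1 - t) * B r ord0.
  by rewrite !mxE.
exact: conv_le.
Qed.

Lemma feasible_convex (I N k : nat) (T : R)
    (alpha beta gamma C ulo uhi x0 : 'I_I -> R) (w : 'I_I -> nat -> R)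
    (cbar clow : 'cV[R]_N) :
  convex (feasible k T alpha beta gamma C ulo uhi x0 w cbar clow).
Proof.
move=> t p q t01 [Sp [zp [Dp Ep]]] [Sq [zq [Dq Eq]]].
split; first exact: inS_conv.
exists (fun i => t *: zp i + (1 - t) *: zq i); split.
  by move=> i; apply: inDi_convex.
change (t *: p.1 + (1 - t) *: q.1 = I%:R^-1 *: \sum_i (t *: zp i + (1 - t) *: zq i)).
by rewrite Ep Eq big_split /= scalerDr -!scaler_sumr !scalerA mulrC [_ * (1 - t)]mulrC.
Qed.

Lemma gobj_convex (N : nat) (zeta : 'cV[R]_N) : convex_fun (gobj zeta).
Proof.
move=> t a b t01; rewrite /gobj mulrCA (mulrCA (1 - t)) -mulrDr.
rewrite ler_wpM2l ?invr_ge0 ?ler0n // !mulr_sumr -big_split ler_sum // => j _.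
have -> : (t *: a + (1 - t) *: b) j ord0 - zeta j ord0
    = t * (a j ord0 - zeta j ord0) + (1 - t) * (b j ord0 - zeta j ord0).
  by rewrite !mxE; ring.
exact: sqr_conv.
Qed.

Lemma hobj_convex (N : nat) : convex_fun (@hobj R N).
Proof.
move=> t a b t01; rewrite /hobj !mulr_sumr -big_split ler_sum // => r _.
by rewrite !mxE sqr_conv.
Qed.

End ConvexFeasibility.

Theorem corollary3 (R : realType) (I N k : nat) (T : R)
  (alpha beta gamma C ulo uhi x0 : 'I_I -> R) (w : 'I_I -> nat -> R)
  (zeta cbar clow : 'cV[R]_N) :
  (0 < I)%N -> (2 <= N)%N -> 0 < T ->
  (forall i, 0 < alpha i <= 1) -> (forall i, 0 < beta i <= 1) ->
  (forall i, 0 < gamma i <= 1) -> (forall i, 0 <= C i) ->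
  (forall i, ulo i < 0 < uhi i) -> (forall i, 0 <= x0 i <= C i) ->
  let M := feasible k T alpha beta gamma C ulo uhi x0 w cbar clow in
  let g := fun p : 'cV[R]_N * 'cV[R]_(N + N) => gobj zeta p.1 in
  let h := fun p : 'cV[R]_N * 'cV[R]_(N + N) => hobj p.2 in
  forall p, efficient M (fobj zeta) p ->
    ~ (ws_solution M g h 0 p \/ ws_solution M g h 1 p) ->
    properly_efficient M (fobj zeta) p.
Proof.
move=> _ _ _ _ _ _ _ _ _ M g h p eff not_extremal.
have Mp : M p by case: eff.
apply: convex_biobjective_properly_efficient => //.
- exact: feasible_convex.
- by move=> t x y; apply: gobj_convex.
- by move=> t x y; apply: hobj_convex.
- by apply: (not_ws_solution1 (h := h)) => // ws; apply: not_extremal; right.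
- by apply: (not_ws_solution0 (g := g)) => // ws; apply: not_extremal; left.
Qed.
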